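(* Let $\{1,\mu_1,\mu_2,\mu_3\}$ be a quaternion basis ($\mu_1,\mu_2$ orthogonal pure unit quaternions, $\mu_3=\mu_1\mu_2$), and let $q=z_1+z_2\mu_2$ with $z_1,z_2$ random variables in $\mathbb{C}_{\mu_1}$ be a centered quaternion Gaussian random variable which is $(1,\mu_1)$-proper, i.e. $q\stackrel{d}{=}q\mu_1$. Let ${\bf q}_{\mathbb{C}}=[z_1,z_1^{\star},z_2,z_2^{\star}]^T$. Then $$\mathbb{E}[{\bf q}_{\mathbb{C}}{\bf q}_{\mathbb{C}}^{\dagger}]=\begin{bmatrix}\sigma^2 & 0 & 0 & \omega\\ 0 & \sigma^2 & \omega^{\star} & 0\\ 0 & \omega & \varsigma^2 & 0\\ \omega^{\star} & 0 & 0 & \varsigma^2\end{bmatrix},$$ where $\sigma^2=\mathbb{E}[|z_1|^2]\in\mathbb{R}$, $\varsigma^2=\mathbb{E}[|z_2|^2]\in\mathbb{R}$ and $\omega=\mathbb{E}[z_1z_2]\in\mathbb{C}_{\mu_1}$.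
   Context: $\mathbb{H}$ denotes the quaternions; $\mathbb{C}_{\mu_1}=\mathbb{R}\oplus\mu_1\mathbb{R}$ is the commutative subfield isomorphic to $\mathbb{C}$; $^{\star}$ denotes conjugation and $\dagger$ conjugate transpose. A quaternion Gaussian random variable is one whose four real components are jointly Gaussian; centered means $\mathbb{E}[q]=0$. $\stackrel{d}{=}$ denotes equality in distribution. *)

From HB Require Import structures.
From mathcomp Require Import all_boot all_order all_algebra.
From mathcomp Require Import all_classical all_reals all_analysis.
Set Implicit Arguments. Unset Strict Implicit. Unset Printing Implicit Defensive.
Import Order.TTheory GRing.Theory Num.Theory.
Local Open Scope classical_set_scope.
Local Open Scope ring_scope.

Record quat (R : Type) := Quat { qr : R; qi : R; qj : R; qk : R }.

Section Quat.
Variable R : comNzRingType.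
Implicit Types p q : quat R.

Definition qreal (a : R) : quat R := Quat a 0 0 0.
Definition qzero : quat R := qreal 0.
Definition qadd p q : quat R :=
  Quat (qr p + qr q) (qi p + qi q) (qj p + qj q) (qk p + qk q).
Definition qscale (a : R) q : quat R := Quat (a * qr q) (a * qi q) (a * qj q) (a * qk q).
Definition qmul p q : quat R :=
  Quat (qr p * qr q - qi p * qi q - qj p * qj q - qk p * qk q)
       (qr p * qi q + qi p * qr q + qj p * qk q - qk p * qj q)
       (qr p * qj q - qi p * qk q + qj p * qr q + qk p * qi q)
       (qr p * qk q + qi p * qj q - qj p * qi q + qk p * qr q).
Definition qconj q : quat R := Quat (qr q) (- qi q) (- qj q) (- qk q).
Definition qnorm2 q : R := qr q ^+ 2 + qi q ^+ 2 + qj q ^+ 2 + qk q ^+ 2.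

Definition pure_unit q := qr q = 0 /\ qnorm2 q = 1.
Definition qorth p q := qr p * qr q + qi p * qi q + qj p * qj q + qk p * qk q = 0.
Definition in_Cmu (mu x : quat R) := exists a b : R, x = qadd (qreal a) (qscale b mu).

Definition mx4_of (rows : seq (seq (quat R))) : 'M[quat R]_4 :=
  \matrix_(i < 4, j < 4) nth qzero (nth [::] rows i) j.
End Quat.

Section Prob.
Context {R : realType} {d : measure_display} {T : measurableType d}.
Variable P : probability T R.

Definition quat_coords (q : quat R) : R * R * R * R := (qr q, qi q, qj q, qk q).

Definition quat_rv (X : T -> quat R) :=
  [/\ measurable_fun setT (fun w => qr (X w)), measurable_fun setT (fun w => qi (X w)),
      measurable_fun setT (fun w => qj (X w)) & measurable_fun setT (fun w => qk (X w))].

Definition gaussian_rv (Y : T -> R) :=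
  measurable_fun setT Y /\
  exists m s : R, forall A : set R, measurable A ->
    P (Y @^-1` A) = if s == 0 then \d_m A else normal_prob m s A.

(* Quaternion Gaussian: the four real components are jointly Gaussian,
   i.e. every real linear combination of them is Gaussian *)
Definition quat_gaussian (X : T -> quat R) :=
  quat_rv X /\ forall a b c e : R,
    gaussian_rv (fun w => a * qr (X w) + b * qi (X w) + c * qj (X w) + e * qk (X w)).

Definition qexp (X : T -> quat R) : quat R :=
  Quat (fine 'E_P[fun w => qr (X w)]) (fine 'E_P[fun w => qi (X w)]) (fine 'E_P[fun w => qj (X w)]) (fine 'E_P[fun w => qk (X w)]).

Definition quat_centered (X : T -> quat R) := qexp X = qzero R.

Definition quat_eq_dist (X Y : T -> quat R) :=
  forall A : set (R * R * R * R), measurable A ->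
    P ((fun w => quat_coords (X w)) @^-1` A) = P ((fun w => quat_coords (Y w)) @^-1` A).
End Prob.

From HB Require Import structures.
From mathcomp Require Import all_boot all_order all_algebra.
From mathcomp Require Import all_classical all_reals all_analysis.
From mathcomp Require Import measurable_realfun ring.
Set Implicit Arguments. Unset Strict Implicit. Unset Printing Implicit Defensive.
Import Order.TTheory GRing.Theory Num.Theory.
Local Open Scope classical_set_scope.
Local Open Scope ring_scope.

(* Write z1 = a + b mu1 and z2 = c + d mu1.  Since {1, mu1, mu2, mu1 mu2} is an
   orthonormal basis, z1 and z2 are polynomial functions of the coordinates of
   q = z1 + z2 mu2, and right multiplication by mu1 maps (z1, z2) to
   (mu1 z1, - mu1 z2).  This sends z1^2, z2^2 and z1 z2^* to their opposites, so
   properness (q and q mu1 have the same law) makes their expectations vanish.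
   The other entries of the augmented covariance follow from z z^* = |z|^2, from
   the commutativity of C_mu1 and from E[x^*] = E[x]^*. *)

Section QuaternionAlgebra.
Variable R : comNzRingType.
Implicit Types (p q mu : quat R) (a b c d : R).

Lemma qconjK q : qconj (qconj q) = q.
Proof. by case: q => x y z t; rewrite /qconj /= !opprK. Qed.

Lemma qconj_mul p q : qconj (qmul p q) = qmul (qconj q) (qconj p).
Proof. by rewrite /qconj /qmul /=; congr Quat; ring. Qed.

Lemma qmul_conjr q : qmul q (qconj q) = qreal (qnorm2 q).
Proof. by rewrite /qconj /qmul /qreal /qnorm2 /=; congr Quat; ring. Qed.

Lemma qmul_conjl q : qmul (qconj q) q = qreal (qnorm2 q).
Proof. by rewrite /qconj /qmul /qreal /qnorm2 /=; congr Quat; ring. Qed.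

Lemma qconj0 : qconj (qzero R) = qzero R.
Proof. by rewrite /qconj /qzero /qreal /= oppr0. Qed.

Definition qcplx mu a b : quat R := qadd (qreal a) (qscale b mu).

Definition qdot p q : R := qr p * qr q + qi p * qi q + qj p * qj q + qk p * qk q.

Lemma qcplx_mulC mu a b c d :
  qmul (qcplx mu a b) (qcplx mu c d) = qmul (qcplx mu c d) (qcplx mu a b).
Proof. by rewrite /qcplx /qmul /qadd /qreal /qscale /=; congr Quat; ring. Qed.

Lemma qconj_qcplx mu a b : qr mu = 0 -> qconj (qcplx mu a b) = qcplx mu a (- b).
Proof.
by case: mu => m0 m1 m2 m3 /= ->; rewrite /qcplx /qconj /qadd /qreal /qscale /=; congr Quat; ring.
Qed.

Lemma qscaleN1_qcplx mu a b : qscale (-1) (qcplx mu a b) = qcplx mu (- a) (- b).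
Proof. by rewrite /qcplx /qadd /qreal /qscale /=; congr Quat; ring. Qed.

Lemma qcplx_mul mu a b c d : pure_unit mu ->
  qmul (qcplx mu a b) (qcplx mu c d) = qcplx mu (a * c - b * d) (a * d + b * c).
Proof.
case: mu => m0 m1 m2 m3 [/= -> mu_norm].
rewrite /qcplx /qmul /qadd /qreal /qscale /=; congr Quat; try ring.
transitivity (a * c - b * d * qnorm2 (Quat 0 m1 m2 m3)); first by rewrite /qnorm2 /=; ring.
by rewrite mu_norm; ring.
Qed.

Lemma in_Cmu_mulC mu p q : in_Cmu mu p -> in_Cmu mu q -> qmul p q = qmul q p.
Proof. by move=> [a [b ->]] [c [d ->]]; exact: qcplx_mulC. Qed.

Lemma in_Cmu_conj mu p : qr mu = 0 -> in_Cmu mu p -> in_Cmu mu (qconj p).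
Proof. by move=> mu0 [a [b ->]]; exists a, (- b); exact: qconj_qcplx. Qed.

End QuaternionAlgebra.

Section OrthonormalPair.
Variables (R : comNzRingType) (mu nu : quat R).
Hypotheses (mu_unit : pure_unit mu) (nu_unit : pure_unit nu) (mu_nu : qorth mu nu).
Implicit Types (p : quat R) (a b c d : R).

Let mu0 : qr mu = 0 := proj1 mu_unit.
Let nu0 : qr nu = 0 := proj1 nu_unit.

Lemma eq_mod_orthonormal (x y k1 k2 k3 : R) :
  x - y = k1 * (qnorm2 mu - 1) + k2 * (qnorm2 nu - 1) + k3 * qdot mu nu -> x = y.
Proof.
case: mu_unit nu_unit => _ -> [_ ->]; rewrite [qdot _ _]mu_nu.
by move=> h; apply/eqP; rewrite -subr_eq0 h; apply/eqP; ring.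
Qed.

(* On C_mu x C_mu, [cd_fst] and [cd_snd] invert [cd_pair] by reading off the
   coordinates along the orthonormal basis 1, mu, nu, mu nu. *)
Definition cd_pair (z1 z2 : quat R) : quat R := qadd z1 (qmul z2 nu).
Definition cd_fst p : quat R := qcplx mu (qr p) (qdot p mu).
Definition cd_snd p : quat R := qcplx mu (qdot p nu) (qdot p (qmul mu nu)).

(* Each identity below holds modulo the ideal generated by |mu|^2 - 1,
   |nu|^2 - 1 and <mu, nu>; the arguments of [by_orthonormal] are the cofactors. *)
Ltac unfold_quat := rewrite /cd_pair /qcplx /qdot /qnorm2 /qadd /qmul /qreal /qscale /=.
Tactic Notation "by_orthonormal" uconstr(c1) uconstr(c2) uconstr(c3) :=
  unfold_quat; refine (@eq_mod_orthonormal _ _ (c1 : R) (c2 : R) (c3 : R) _);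
  rewrite /qnorm2 /qdot mu0 nu0; ring.

Lemma cd_fst_pair a b c d : cd_fst (cd_pair (qcplx mu a b) (qcplx mu c d)) = qcplx mu a b.
Proof. by rewrite /cd_fst; congr qcplx; [by_orthonormal 0 0 (- d) | by_orthonormal b 0 c]. Qed.

Lemma cd_snd_pair a b c d : cd_snd (cd_pair (qcplx mu a b) (qcplx mu c d)) = qcplx mu c d.
Proof.
by rewrite /cd_snd; congr qcplx; [by_orthonormal 0 c b | by_orthonormal (d * qnorm2 nu) d (- a)].
Qed.

Lemma cd_fst_pair_mulr a b c d :
  cd_fst (qmul (cd_pair (qcplx mu a b) (qcplx mu c d)) mu) = qcplx mu (- b) a.
Proof.
rewrite /cd_fst; congr qcplx; first by_orthonormal (- b) 0 (- c).
by_orthonormal a 0 (- d * qnorm2 mu).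
Qed.

Lemma cd_snd_pair_mulr a b c d :
  cd_snd (qmul (cd_pair (qcplx mu a b) (qcplx mu c d)) mu) = qcplx mu d (- c).
Proof.
rewrite /cd_snd; congr qcplx; first by_orthonormal (d * qnorm2 nu) d (a - 2 * d * qdot mu nu).
by_orthonormal (- c * qnorm2 nu) (- c) (b * qnorm2 mu + 2 * c * qdot mu nu).
Qed.

End OrthonormalPair.

Section Expectation.
Context {R : realType} {d : measure_display} {T : measurableType d}.
Variable P : probability T R.

Lemma fine_expectationN (f : T -> R) :
  fine ('E_P[fun w => (- f w)%R])%E = - fine ('E_P[f])%E.
Proof.
have posN : ((fun w => (- f w)%R%:E)^\+ = (fun w => (f w)%:E)^\-)%E.
  by rewrite -funeposN; apply/funext.
have negN : ((fun w => (- f w)%R%:E)^\- = (fun w => (f w)%:E)^\+)%E.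
  by rewrite -funenegN; apply/funext.
rewrite unlock integralE [in RHS]integralE posN negN.
case: (\int[P]_x _)%E => [u||]; case: (\int[P]_x _)%E => [v||] //=; rewrite ?oppr0 //.
by rewrite opprB.
Qed.

Lemma expectation_eq_dist {d' : measure_display} {U : measurableType d'} (X Y : T -> U) :
  measurable_fun setT X -> measurable_fun setT Y ->
  (forall A, measurable A -> P (X @^-1` A) = P (Y @^-1` A)) ->
  forall G : U -> R, measurable_fun setT G ->
  ('E_P[G \o X] = 'E_P[G \o Y])%E.
Proof.
move=> mX mY XY G /measurable_EFinP mG.
have E_push Z : measurable_fun setT Z ->
    ('E_P[G \o Z] = \int[pushforward P Z]_y (EFin \o G)^\+ y
                    - \int[pushforward P Z]_y (EFin \o G)^\- y)%E.
  move=> mZ; rewrite unlock integralE.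
  rewrite !ge0_integral_pushforward ?preimage_setT //.
  - by rewrite -funepos_comp -funeneg_comp.
  - exact: measurable_funeneg.
  - exact: measurable_funepos.
rewrite (E_push _ mX) (E_push _ mY).
by congr (_ - _)%E; apply: eq_measure_integral => A mA _; exact: XY.
Qed.

Lemma fine_expectation_odd {d' : measure_display} {U : measurableType d'} (X Y : T -> U) :
  measurable_fun setT X -> measurable_fun setT Y ->
  (forall A, measurable A -> P (X @^-1` A) = P (Y @^-1` A)) ->
  forall G : U -> R, measurable_fun setT G ->
  (forall w, G (Y w) = - G (X w)) -> fine ('E_P[G \o X])%E = 0.
Proof.
move=> mX mY XY G mG GYX.
have := congr1 fine (expectation_eq_dist mX mY XY mG).
rewrite [G \o Y](funext GYX) fine_expectationN => /eqP.
by rewrite -subr_eq0 opprK -mulr2n mulrn_eq0 /= => /eqP.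
Qed.

End Expectation.

Section QuaternionRandomVariables.
Context {R : realType} {d : measure_display} {T : measurableType d}.
Implicit Types X Y : T -> quat R.

Ltac measurable_poly := repeat first
  [ assumption | exact: measurable_cst | apply: measurable_funD | apply: measurable_funB
  | apply: measurable_funM | apply: measurable_funN ].

Lemma quat_rv_cst (p : quat R) : quat_rv (fun _ : T => p).
Proof. by split; exact: measurable_cst. Qed.

Lemma quat_rv_add X Y : quat_rv X -> quat_rv Y -> quat_rv (fun w => qadd (X w) (Y w)).
Proof. by move=> [? ? ? ?] [? ? ? ?]; split; rewrite /qadd /=; measurable_poly. Qed.

Lemma quat_rv_mul X Y : quat_rv X -> quat_rv Y -> quat_rv (fun w => qmul (X w) (Y w)).
Proof. by move=> [? ? ? ?] [? ? ? ?]; split; rewrite /qmul /=; measurable_poly. Qed.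

Lemma quat_rv_qcplx (mu : quat R) (a b : T -> R) :
  measurable_fun setT a -> measurable_fun setT b -> quat_rv (fun w => qcplx mu (a w) (b w)).
Proof. by move=> *; split; rewrite /qcplx /qadd /qreal /qscale /=; measurable_poly. Qed.

Lemma measurable_qdot X (p : quat R) : quat_rv X -> measurable_fun setT (fun w => qdot (X w) p).
Proof. by move=> [? ? ? ?]; rewrite /qdot; measurable_poly. Qed.

Lemma measurable_quat_coords X : quat_rv X -> measurable_fun setT (fun w => quat_coords (X w)).
Proof. by move=> [? ? ? ?]; do 3 apply: measurable_fun_pair => //. Qed.

Lemma quat_rv_conj X : quat_rv X -> quat_rv (fun w => qconj (X w)).
Proof. by move=> [? ? ? ?]; split; rewrite /qconj /=; [|exact: measurable_funN ..]. Qed.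

End QuaternionRandomVariables.

Definition quat_of_coords (R : Type) (x : R * R * R * R) : quat R :=
  Quat x.1.1.1 x.1.1.2 x.1.2 x.2.

Lemma quat_coordsK (R : realType) : cancel (@quat_coords R) (@quat_of_coords R).
Proof. by case. Qed.

Lemma quat_rv_of_coords (R : realType) : quat_rv (@quat_of_coords R).
Proof.
split=> /=.
- exact: measurableT_comp measurable_fst (measurableT_comp measurable_fst measurable_fst).
- exact: measurableT_comp measurable_snd (measurableT_comp measurable_fst measurable_fst).
- exact: measurableT_comp measurable_snd measurable_fst.
- exact: measurable_snd.
Qed.

Section QuaternionExpectation.
Context {R : realType} {d : measure_display} {T : measurableType d}.
Variable P : probability T R.
Implicit Types X Y : T -> quat R.

Lemma eq_qexp X Y : (forall w, X w = Y w) -> qexp P X = qexp P Y.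
Proof. by move=> /funext ->. Qed.

Lemma qexp_conj X : qexp P (fun w => qconj (X w)) = qconj (qexp P X).
Proof. by rewrite /qexp /qconj /= !fine_expectationN. Qed.

Lemma qexp_qreal (f : T -> R) : qexp P (fun w => qreal (f w)) = qreal (fine ('E_P[f])%E).
Proof. by rewrite /qexp /qreal /= unlock integral0. Qed.

Lemma qexp_odd X Y (F : quat R -> quat R) :
  quat_rv X -> quat_rv Y -> quat_eq_dist P X Y -> quat_rv (F \o @quat_of_coords R) ->
  (forall w, F (Y w) = qscale (-1) (F (X w))) -> qexp P (fun w => F (X w)) = qzero R.
Proof.
move=> /measurable_quat_coords mX /measurable_quat_coords mY XY [? ? ? ?] FYX.
have odd (c : quat R -> R) : measurable_fun setT (c \o F \o @quat_of_coords R) ->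
    (forall p, c (qscale (-1) p) = - c p) -> fine ('E_P[fun w => c (F (X w))])%E = 0.
  move=> mc cN; rewrite -(fine_expectation_odd mX mY XY mc) /=.
    by congr (fine ('E_P[_])%E); apply/funext => w /=; rewrite quat_coordsK.
  by move=> w /=; rewrite !quat_coordsK FYX cN.
by rewrite /qexp /qzero /qreal; congr Quat; apply: odd => // p; rewrite /qscale /= mulN1r.
Qed.

End QuaternionExpectation.

Section AugmentedCovariance.
Context {R : realType} {d : measure_display} {T : measurableType d}.
Variables (P : probability T R) (z1 z2 : T -> quat R).
Hypotheses (z12C : forall w, qmul (z1 w) (z2 w) = qmul (z2 w) (z1 w))
  (z12conjC : forall w, qmul (z1 w) (qconj (z2 w)) = qmul (qconj (z2 w)) (z1 w))
  (z11_0 : qexp P (fun w => qmul (z1 w) (z1 w)) = qzero R)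
  (z22_0 : qexp P (fun w => qmul (z2 w) (z2 w)) = qzero R)
  (z12conj_0 : qexp P (fun w => qmul (z1 w) (qconj (z2 w))) = qzero R).

Let qconj_qexp0 (X : T -> quat R) :
  qexp P X = qzero R -> qexp P (fun w => qconj (X w)) = qzero R.
Proof. by rewrite qexp_conj => ->; exact: qconj0. Qed.

Lemma augmented_covariance :
  let qC := fun w => [:: z1 w; qconj (z1 w); z2 w; qconj (z2 w)] in
  let sigma2 := qreal (fine ('E_P[fun w => qnorm2 (z1 w)])%E) in
  let varsigma2 := qreal (fine ('E_P[fun w => qnorm2 (z2 w)])%E) in
  let omega := qexp P (fun w => qmul (z1 w) (z2 w)) in
  let o := qzero R in
  (\matrix_(i < 4, j < 4)
      qexp P (fun w => qmul (nth o (qC w) i) (qconj (nth o (qC w) j))))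
  = mx4_of [:: [:: sigma2; o; o; omega];
              [:: o; sigma2; qconj omega; o];
              [:: o; omega; varsigma2; o];
              [:: qconj omega; o; o; varsigma2]].
Proof.
move=> qC sigma2 varsigma2 omega o; apply/matrixP => i j; rewrite !mxE.
case: i => [[|[|[|[|//]]]] ?]; case: j => [[|[|[|[|//]]]] ?] /=.
- by under eq_qexp do rewrite qmul_conjr; rewrite qexp_qreal.
- by under eq_qexp do rewrite qconjK.
- exact: z12conj_0.
- by under eq_qexp do rewrite qconjK.
- by under eq_qexp do rewrite -qconj_mul; exact: qconj_qexp0.
- by under eq_qexp do rewrite qconjK qmul_conjl; rewrite qexp_qreal.
- by under eq_qexp do rewrite -qconj_mul -z12C; rewrite qexp_conj.
- by under eq_qexp do rewrite qconjK -[z2 _]qconjK -qconj_mul -z12conjC; exact: qconj_qexp0.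
- by under eq_qexp do rewrite -[z2 _]qconjK -qconj_mul; exact: qconj_qexp0.
- by under eq_qexp do rewrite qconjK -z12C.
- by under eq_qexp do rewrite qmul_conjr; rewrite qexp_qreal.
- by under eq_qexp do rewrite qconjK.
- by under eq_qexp do rewrite -qconj_mul; rewrite qexp_conj.
- by under eq_qexp do rewrite qconjK -z12conjC.
- by under eq_qexp do rewrite -qconj_mul; exact: qconj_qexp0.
- by under eq_qexp do rewrite qconjK qmul_conjl; rewrite qexp_qreal.
Qed.

End AugmentedCovariance.

Section CayleyDicksonRandomVariables.
Context {R : realType} {d : measure_display} {T : measurableType d}.
Variables (mu nu : quat R) (X : T -> quat R).
Hypothesis X_rv : quat_rv X.

Lemma quat_rv_cd_fst : quat_rv (fun w => cd_fst mu (X w)).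
Proof. by case: X_rv => ? ? ? ?; apply: quat_rv_qcplx => //; exact: measurable_qdot. Qed.

Lemma quat_rv_cd_snd : quat_rv (fun w => cd_snd mu nu (X w)).
Proof. by apply: quat_rv_qcplx; exact: measurable_qdot. Qed.

End CayleyDicksonRandomVariables.

Section ProperQuaternion.
Context {R : realType} {d : measure_display} {T : measurableType d}.
Variables (P : probability T R) (mu nu : quat R) (z1 z2 : T -> quat R).
Hypotheses (mu_unit : pure_unit mu) (nu_unit : pure_unit nu) (mu_nu : qorth mu nu).
Hypotheses (z1_Cmu : forall w, in_Cmu mu (z1 w)) (z2_Cmu : forall w, in_Cmu mu (z2 w)).
Hypotheses (z1_rv : quat_rv z1) (z2_rv : quat_rv z2).
Let q w := cd_pair nu (z1 w) (z2 w).
Hypothesis q_proper : quat_eq_dist P q (fun w => qmul (q w) mu).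

Lemma proper_qexp_odd (G : quat R -> quat R -> quat R) :
  quat_rv (fun x => G (cd_fst mu (quat_of_coords x)) (cd_snd mu nu (quat_of_coords x))) ->
  (forall a b c d, G (qcplx mu (- b) a) (qcplx mu d (- c))
                   = qscale (-1) (G (qcplx mu a b) (qcplx mu c d))) ->
  qexp P (fun w => G (z1 w) (z2 w)) = qzero R.
Proof.
move=> G_rv G_odd.
have q_rv : quat_rv q by apply: quat_rv_add z1_rv (quat_rv_mul z2_rv (quat_rv_cst nu)).
have qmu_rv : quat_rv (fun w => qmul (q w) mu) by apply: quat_rv_mul q_rv (quat_rv_cst mu).
pose F p := G (cd_fst mu p) (cd_snd mu nu p).
have coords w : exists a b c d, z1 w = qcplx mu a b /\ z2 w = qcplx mu c d.
  by have [a [b z1E]] := z1_Cmu w; have [c [d' z2E]] := z2_Cmu w; exists a, b, c, d'.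
transitivity (qexp P (fun w => F (q w))).
  apply: eq_qexp => w; have [a [b [c [d' [z1E z2E]]]]] := coords w.
  by rewrite /F /q z1E z2E cd_fst_pair ?cd_snd_pair.
apply: (qexp_odd q_rv qmu_rv q_proper G_rv) => w.
have [a [b [c [d' [z1E z2E]]]]] := coords w.
by rewrite /F /q z1E z2E cd_fst_pair_mulr ?cd_snd_pair_mulr ?cd_fst_pair ?cd_snd_pair.
Qed.

End ProperQuaternion.

Theorem mainTheorem5 (R : realType) (d : measure_display) (T : measurableType d)
    (P : probability T R) (mu1 mu2 : quat R) (z1 z2 : T -> quat R) :
  pure_unit mu1 -> pure_unit mu2 -> qorth mu1 mu2 ->
  (forall w, in_Cmu mu1 (z1 w)) -> (forall w, in_Cmu mu1 (z2 w)) ->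
  quat_rv z1 -> quat_rv z2 ->
  let q := fun w => qadd (z1 w) (qmul (z2 w) mu2) in
  quat_gaussian P q ->
  quat_centered P q ->
  quat_eq_dist P q (fun w => qmul (q w) mu1) ->
  let qC := fun w => [:: z1 w; qconj (z1 w); z2 w; qconj (z2 w)] in
  let sigma2 := qreal (fine ('E_P[fun w => qnorm2 (z1 w)])%E) in
  let varsigma2 := qreal (fine ('E_P[fun w => qnorm2 (z2 w)])%E) in
  let omega := qexp P (fun w => qmul (z1 w) (z2 w)) in
  let o := qzero R in
  (\matrix_(i < 4, j < 4)
      qexp P (fun w => qmul (nth o (qC w) i) (qconj (nth o (qC w) j))))
  = mx4_of [:: [:: sigma2; o; o; omega];
              [:: o; sigma2; qconj omega; o];
              [:: o; omega; varsigma2; o];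
              [:: qconj omega; o; o; varsigma2]].
Proof.
move=> mu1_unit mu2_unit mu12 z1_Cmu z2_Cmu z1_rv z2_rv q _ _ q_proper.
have mu1_0 : qr mu1 = 0 by case: mu1_unit.
have fst_rv := quat_rv_cd_fst mu1 (quat_rv_of_coords R).
have snd_rv := quat_rv_cd_snd mu1 mu2 (quat_rv_of_coords R).
have proper_odd := proper_qexp_odd mu1_unit mu2_unit mu12 z1_Cmu z2_Cmu z1_rv z2_rv q_proper.
apply: augmented_covariance => [w | w | | |].
- exact: in_Cmu_mulC.
- exact: in_Cmu_mulC (in_Cmu_conj mu1_0 _).
- apply: (proper_odd (fun x _ => qmul x x)); first exact: quat_rv_mul.
  by move=> a b c d'; rewrite !qcplx_mul // qscaleN1_qcplx; congr qcplx; ring.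
- apply: (proper_odd (fun _ y => qmul y y)); first exact: quat_rv_mul.
  by move=> a b c d'; rewrite !qcplx_mul // qscaleN1_qcplx; congr qcplx; ring.
- apply: (proper_odd (fun x y => qmul x (qconj y))); first exact: quat_rv_mul (quat_rv_conj _).
  by move=> a b c d'; rewrite !qconj_qcplx // !qcplx_mul // qscaleN1_qcplx; congr qcplx; ring.
Qed.
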